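(* Let $u$ and $v$ be vertices of $T$ such that $u$ is a descendant of $v$ and $T^v$ is contained in $T^u$. Let $T'$ be the canonical subtree among the connected components of the forest obtained from $T^u$ by deleting $C_{T^u}$ which contains $v$, and let $X$ be the set of vertices in $C_{T^u}$ that are descendants of $v$ and ancestors of $u$. Let $x$ be the element of $X$ that is highest in $T$. Then either $rt(T')$ or $l(T')$ is the parent of $x$.
   Context: Let $T$ be a rooted tree on $n$ vertices with positive edge weights. Ancestor/descendant refer to $T$, and a vertex counts as its own ancestor and descendant. $T_v$ denotes the subtree of $T$ rooted at $v$. For every non-leaf vertex $v$ of $T$ fix a child $c_1(v)$ with $|T_{c_1(v)}|$ maximal among the children of $v$; the edges $(v,c_1(v))$ are called leftmost. A subtree $R$ of $T$ (connected subgraph) is rooted at its vertex closest to the root of $T$, denoted $rt(R)$, and inherits the leftmost labelling; $R_v$ is the subtree of $R$ rooted at $v$. For $v\in V(R)$, $P_R(v)$ is the longest downward path from $v$ in $R$ using only leftmost edges; its last vertex is $l(v)$, and $l(R):=l(rt(R))$. For an integer $d$, a vertex $v$ of $R$ is $d$-balanced (in $R$) if $|R_{c_1(v)}|\le |R|-d$ (where $|R_{c_1(v)}|=0$ if $c_1(v)$ is undefined or not in $R$). $b_d(v)$ is the first $d$-balanced vertex on $P_R(v)$, or NULL if none. Define $CV(R,d)=\emptyset$ if $b_d(rt(R))$ is NULL, and otherwise, with $b=b_d(rt(R))$, $CV(R,d)=\{b\}\cup\bigcup_{w}CV(R_w,d)$, the union over the children $w$ of $b$ in $R$. Fix an integer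 $k\ge 4$. For a subtree $R$ with $m$ vertices, $C_R:=V(R)$ if $k\ge m/2-1$, and otherwise $C_R:=CV(R,m/k)\cup\{l(R),rt(R)\}$. Canonical subtrees: $T$ is canonical; if $R$ is canonical, every connected component of the forest obtained from $R$ by deleting the vertices of $C_R$ (and incident edges) is canonical. Every vertex $v$ of $T$ belongs to $C_R$ for exactly one canonical subtree $R$, denoted $T^v$. *)

(* Rooted trees on a finite vertex type V, given by a parent
   function p with a root r (p r = r, every vertex reaches r by iterating p).
   Edges of T are {v, p v} for v <> r.  Edge weights play no role in the
   notions below and are omitted. *)
From HB Require Import structures.
From mathcomp Require Import all_boot all_order all_algebra.
Set Implicit Arguments. Unset Strict Implicit. Unset Printing Implicit Defensive.
Import Order.TTheory GRing.Theory Num.Theory.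

Section Canon.
Variables (V : finType) (p : V -> V) (r : V) (c1 : V -> option V) (k : nat).

Definition is_rooted_tree : Prop :=
  p r = r /\ forall v, exists n, iter n p v = r.

(* x is an ancestor of y (every vertex is its own ancestor) *)
Definition anc (x y : V) : bool := [exists i : 'I_#|V|.+1, iter i p y == x].

Definition desc (v : V) : {set V} := [set w | anc v w].

Definition child (v w : V) : bool := (p w == v) && (w != v).

Definition is_leftmost : Prop :=
  forall v, match c1 v with
            | None => forall w, ~~ child v w
            | Some c => child v c /\ forall w, child v w -> #|desc w| <= #|desc c|
            end.

Definition adj (x y : V) : bool := (x != y) && ((p x == y) || (p y == x)).

Definition connectedb (R : {set V}) : bool :=
  (R != set0) &&
  [forall x in R, forall y in R,
     connect (fun a b => [&& a \in R, b \in R & adj a b]) x y].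

Definition rt (R : {set V}) : V :=
  odflt r [pick x in R | [forall y in R, anc x y]].

Definition stepR (R : {set V}) (x : V) : V :=
  match c1 x with Some c => if c \in R then c else x | None => x end.

(* the vertices of P_R(v), in order (the last one possibly repeated) *)
Definition pathR (R : {set V}) (v : V) : seq V :=
  [seq iter i (stepR R) v | i <- iota 0 #|V|].

Definition lv (R : {set V}) (v : V) : V := iter #|V| (stepR R) v.
Definition lR (R : {set V}) : V := lv R (rt R).

(* |R_{c1(v)}|, which is 0 if c1(v) is undefined or not in R *)
Definition c1size (R : {set V}) (x : V) : nat :=
  match c1 x with Some c => if c \in R then #|R :&: desc c| else 0 | None => 0 end.

Definition balanced (R : {set V}) (d : rat) (x : V) : bool :=
  (x \in R) && ((c1size R x)%:R <= (#|R|%:R : rat) - d)%R.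

Definition bd (R : {set V}) (d : rat) (v : V) : option V :=
  ohead [seq x <- pathR R v | balanced R d x].

(* CV(R,d), by recursion with fuel (the recursion is on strictly smaller
   subtrees R_w, so #|V|.+1 fuel suffices) *)
Fixpoint CVf (fuel : nat) (R : {set V}) (d : rat) : {set V} :=
  match fuel with
  | 0 => set0
  | n.+1 =>
    match bd R d (rt R) with
    | None => set0
    | Some b => b |: \bigcup_(w | (w \in R) && child b w) CVf n (R :&: desc w) d
    end
  end.
Definition CV (R : {set V}) (d : rat) : {set V} := CVf #|V|.+1 R d.

Definition C (R : {set V}) : {set V} :=
  let m := #|R| in
  if (m%:R / 2 - 1 <= (k%:R : rat))%R then R
  else CV R (m%:R / k%:R)%R :|: [set lR R; rt R].

Definition component (A S : {set V}) : Prop :=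
  [/\ connectedb S, S \subset A &
      forall x y, x \in S -> y \in A -> adj x y -> y \in S].

Inductive canonical : {set V} -> Prop :=
| canonical_T : canonical setT
| canonical_comp R S : canonical R -> component (R :\: C R) S -> canonical S.

End Canon.

From mathcomp Require Import all_boot all_order all_algebra.
Set Implicit Arguments. Unset Strict Implicit. Unset Printing Implicit Defensive.

(* Every vertex z strictly between v and x lies in T': it lies in T^u because canonical
   subtrees are connected, it avoids C_{T^u} by the choice of x, and so it is joined to v
   inside T^u minus C_{T^u}.  In particular p(x) lies in T' while x does not.  Unfolding
   the recursion defining CV shows that a vertex outside C_R whose child t has a
   descendant in C_R has t as its leftmost child.  Hence the leftmost path from rt(T')
   follows the tree path towards x and stops at p(x), whose leftmost child x has left T':
   p(x) = l(T'). *)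

Section CanonicalSubtrees.
Variables (V : finType) (p : V -> V) (r : V) (c1 : V -> option V) (k : nat).
Implicit Types (R S A : {set V}) (a b c s t v w x y z : V).

Lemma ancP a b : reflect (exists n, iter n p b = a) (anc p a b).
Proof.
apply: (iffP existsP) => [[i /eqP <-]|[n ba]]; first by exists i.
have ba_conn : fconnect p b a by rewrite -ba fconnect_iter.
have lt_ab : findex p b a < #|V|.+1.
  exact: leq_trans (findex_max ba_conn) (leqW (max_card _)).
by exists (Ordinal lt_ab); rewrite /= iter_findex.
Qed.

Lemma anc_refl a : anc p a a.
Proof. by apply/ancP; exists 0. Qed.

Lemma anc_trans a b c : anc p a b -> anc p b c -> anc p a c.
Proof. by move=> /ancP[m ab] /ancP[n bc]; apply/ancP; exists (m + n); rewrite iterD bc. Qed.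

Lemma anc_parent x : anc p (p x) x.
Proof. by apply/ancP; exists 1. Qed.

Lemma anc_eq_or_parent a b : anc p a b -> a = b \/ anc p a (p b).
Proof.
by move=> /ancP[[|n] ab]; [left | right; apply/ancP; exists n; rewrite -iterSr].
Qed.

Lemma anc_total a b y : anc p a y -> anc p b y -> anc p a b \/ anc p b a.
Proof.
move=> /ancP[i ya] /ancP[j yb]; case: (leqP i j) => ij; [right | left]; apply/ancP.
  by exists (j - i); rewrite -ya -iterD subnK.
by exists (i - j); rewrite -yb -iterD subnK // ltnW.
Qed.

Lemma anc_child s y : anc p s y -> s != y -> exists t, [/\ p t = s, t != s & anc p t y].
Proof.
move=> /ancP[n]; elim: n y => [|n IH] y; first by move=> /= ->; rewrite eqxx.
rewrite iterSr => ys nsy; have [pys|npys] := eqVneq (p y) s.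
  by exists y; rewrite eq_sym anc_refl.
rewrite eq_sym in npys; have [t [pt nts ty]] := IH _ ys npys.
by exists t; split=> //; apply: anc_trans ty (anc_parent y).
Qed.

Lemma component_down_closed A S v w :
  component p A S -> v \in S -> anc p v w ->
  (forall z, anc p v z -> anc p z w -> z \in A) -> w \in S.
Proof.
move=> [_ _ closedS] vS /ancP[n]; elim: n w => [w /= -> //|n IH] w.
rewrite iterSr => vw between.
have pwS : p w \in S.
  by apply: IH vw _ => z vz zpw; apply: between vz (anc_trans zpw (anc_parent w)).
have [<- //|pww] := eqVneq (p w) w.
apply: closedS pwS _ _; last by rewrite /adj pww eqxx orbT.
by apply: between (anc_refl w); apply/ancP; exists n.+1; rewrite iterSr.
Qed.

(* A path inside R from c to a leaves the subtree of z through z itself. *)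
Lemma connected_exit R a c z :
  connectedb p R -> a \in R -> c \in R -> anc p z c -> ~~ anc p z a -> z \in R.
Proof.
case/andP=> _ /forall_inP conn aR cR.
have /forall_inP/(_ a aR)/connectP[s sp ->] := conn c cR.
elim: s c cR sp => [|b s IH] c cR /=; first by move=> _ ->.
case/andP=> /and3P[_ bR /andP[_ cb]] sp zc.
have [zb|nzb] := boolP (anc p z b); first exact: IH bR sp zb.
move=> _; case/orP: cb => /eqP cb.
  by case: (anc_eq_or_parent zc) => [-> //|]; rewrite cb (negbTE nzb).
by case/negP: nzb; apply: anc_trans zc _; rewrite -cb anc_parent.
Qed.

Hypothesis tree : is_rooted_tree p r.

Lemma iter_root n : iter n p r = r.
Proof. by case: tree => pr _; elim: n => //= n ->. Qed.

Lemma fixed_root z : p z = z -> z = r.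
Proof. by case: tree => _ /(_ z)[n <-] pz; elim: n => //= n <-. Qed.

Lemma anc_root y : anc p r y.
Proof. by have [n yr] := proj2 tree y; apply/ancP; exists n. Qed.

Lemma anc_antisym a b : anc p a b -> anc p b a -> a = b.
Proof.
move=> /ancP[i ba] /ancP[j ab].
have cycle m : iter (m * (i + j)) p b = b.
  by elim: m => // m IH; rewrite mulSn iterD IH addnC iterD ba ab.
have [/eqP|ij_gt0] := posnP (i + j).
  by rewrite addn_eq0 => /andP[/eqP i0 _]; rewrite -ba i0.
have [n bn] := proj2 tree b.
have br : b = r.
  by rewrite -(cycle n) -(subnK (leq_pmulr n ij_gt0)) iterD bn iter_root.
by rewrite -ba br iter_root.
Qed.

Definition depth v := #|[set y | anc p y v]|.

Lemma depth_lt s t : anc p s t -> s != t -> depth s < depth t.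
Proof.
move=> st nst; apply: proper_card; rewrite properE; apply/andP; split.
  by apply/subsetP => y; rewrite !inE => /anc_trans; apply.
apply/subsetPn; exists t; rewrite !inE ?anc_refl //.
by apply: contra nst => ts; rewrite (anc_antisym st ts).
Qed.

Definition is_top R a := a \in R /\ {in R, forall y, anc p a y}.

Definition anc_convex R :=
  forall a z c, a \in R -> c \in R -> anc p a z -> anc p z c -> z \in R.

Lemma rt_top R a : is_top R a -> rt p r R = a.
Proof.
move=> [aR top]; rewrite /rt; case: pickP => [b /andP[bR /forall_inP btop]|none] /=.
  by apply: anc_antisym; [apply: btop | apply: top].
by have := none a; rewrite aR (introT forall_inP top).
Qed.

Lemma top_not_child R a t : is_top R a -> p t \in R -> p t != t -> t != a.
Proof.
move=> [_ top] ptR; apply: contra => /eqP ta; subst a.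
by apply/eqP/anc_antisym; [apply: anc_parent | apply: top].
Qed.

Lemma connected_anc_convex R : connectedb p R -> anc_convex R.
Proof.
move=> conn a z c aR cR az zc; have [->|nza] := eqVneq z a; first by [].
apply: connected_exit conn aR cR zc _; apply: contra nza => za.
by rewrite (anc_antisym az za).
Qed.

Lemma connected_top R : connectedb p R -> exists a, is_top R a.
Proof.
move=> conn; have /andP[/set0Pn[a0 a0R] /forall_inP paths] := conn.
have [a aR amin] := arg_minnP depth a0R.
exists a; split=> // y yR.
have /forall_inP/(_ y yR)/connectP[s sp ->] := paths a aR.
suff walk c (t : seq V) : c \in R -> anc p a c ->
    path (fun x y => [&& x \in R, y \in R & adj p x y]) c t -> anc p a (last c t).
  exact: walk aR (anc_refl a) sp.
elim: t c => [//|b t IH] c cR ac /= /andP[/and3P[_ bR /andP[ncb cb]] bt].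
apply: (IH _ bR _ bt).
case/orP: cb => /eqP cb; last by apply: anc_trans ac _; rewrite -cb anc_parent.
case: (anc_eq_or_parent ac) => [ac_eq|]; last by rewrite cb.
have := amin b bR; rewrite leqNgt -cb -ac_eq in ncb * => /negP[].
by apply: depth_lt; [apply: anc_parent | rewrite eq_sym].
Qed.

Lemma canonical_top R : canonical p r c1 k R -> exists a, is_top R a.
Proof.
case=> [|R' S _ [conn _ _]]; last exact: connected_top.
by exists r; split=> [|y _]; [rewrite inE | apply: anc_root].
Qed.

Lemma canonical_anc_convex R : canonical p r c1 k R -> anc_convex R.
Proof.
case=> [|R' S _ [conn _ _]]; last exact: connected_anc_convex.
by move=> *; rewrite inE.
Qed.

Hypothesis leftmost : is_leftmost p c1.

Lemma iter_stepR_mem R n a : a \in R -> iter n (stepR c1 R) a \in R.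
Proof.
move=> aR; elim: n => //= n IH; rewrite {1}/stepR.
by case: (c1 _) => [c|//]; case: ifP.
Qed.

Lemma leftmost_above_stepR R a n t :
  anc p a t -> t != a -> anc p t (iter n (stepR c1 R) a) -> c1 (p t) = Some t.
Proof.
move=> a_t nta; elim: n => [|n IH] /=.
  by move=> ta; case/eqP: nta; apply: anc_antisym.
rewrite {1}/stepR; set s := iter n _ a.
case cs: (c1 s) (leftmost s) => [c|]; last by move=> _; apply: IH.
case=> /andP[/eqP pc _] _.
case: ifP => _ tc; last exact: IH.
by case: (anc_eq_or_parent tc) => [->|]; rewrite pc //; apply: IH.
Qed.

Lemma bd_stepR R (d : rat) a b :
  bd p c1 R d a = Some b -> b \in R /\ exists n, b = iter n (stepR c1 R) a.
Proof.
rewrite /bd => bdE; have : b \in [seq x <- pathR c1 R a | balanced p c1 R d x].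
  by move: bdE; case: (filter _ _) => [|b' s] //= [->]; rewrite mem_head.
by rewrite mem_filter => /andP[/andP[bR _] /mapP[n _ bn]]; split=> //; exists n.
Qed.

Lemma CVf_sub n R (d : rat) : CVf p r c1 n R d \subset R.
Proof.
elim: n R => [|n IH] R /=; first exact: sub0set.
case bdE: (bd p c1 R d (rt p r R)) => [b|]; last exact: sub0set.
have [bR _] := bd_stepR bdE.
apply/subsetP => y; rewrite in_setU1 => /orP[/eqP -> //|/bigcupP[w _ yw]].
by have := subsetP (IH _) y yw; rewrite inE => /andP[].
Qed.

(* CV(R,d) consists of b = b_d(rt R), which lies on the leftmost path from rt R, and of
   the CV(R_w,d) for the children w of b: so t lies above that path, or we recurse into R_w. *)
Lemma CVf_leftmost_child n R (d : rat) a t y :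
  is_top R a -> t \in R -> p t \in R -> p t != t -> p t \notin CVf p r c1 n R d ->
  y \in CVf p r c1 n R d -> anc p t y -> c1 (p t) = Some t.
Proof.
elim: n R a => [|n IH] R a topR tR ptR ptt; first by move=> _; rewrite /= inE.
have top := topR.2; have nta := top_not_child topR ptR ptt.
rewrite /= (rt_top topR); case bdE: (bd p c1 R d a) => [b|]; last by move=> _; rewrite inE.
have [_ [i bi]] := bd_stepR bdE.
rewrite !in_setU1 negb_or => /andP[ptb ptW].
case/orP=> [/eqP yb|/bigcupP[w /andP[wR /andP[/eqP pw wb]] yw]] ty.
  by apply: (leftmost_above_stepR (R := R) (n := i) (top _ tR) nta); rewrite -bi -yb.
have wy : anc p w y.
  by have := subsetP (CVf_sub n (R :&: desc p w) d) y yw; rewrite !inE => /andP[].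
have [tw_eq|ntw] := eqVneq t w; first by rewrite tw_eq pw eqxx in ptb.
case: (anc_total ty wy) => [tw|wt].
  case: (anc_eq_or_parent tw) => [tw_eq|tpw]; first by rewrite tw_eq eqxx in ntw.
  by apply: (leftmost_above_stepR (R := R) (n := i) (top _ tR) nta); rewrite -bi -pw.
have wpt : anc p w (p t).
  by case: (anc_eq_or_parent wt) => // wt_eq; rewrite wt_eq eqxx in ntw.
apply: (IH (R :&: desc p w) w) yw ty.
- by split=> [|z]; rewrite !inE ?wR ?anc_refl // => /andP[].
- by rewrite !inE tR wt.
- by rewrite !inE ptR wpt.
- exact: ptt.
- apply: contra ptW => ptW; apply/bigcupP; exists w => //.
  by rewrite wR /child pw eqxx wb.
Qed.

Lemma C_sub R a : is_top R a -> C p r c1 k R \subset R.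
Proof.
move=> topR; have aR := topR.1; rewrite /C; case: ifP => _ //.
apply/subsetP => y; rewrite !inE => /or3P[yCV|/eqP ->|/eqP ->].
- exact: (subsetP (CVf_sub _ _ _) y yCV).
- by rewrite /lR /lv (rt_top topR) iter_stepR_mem.
- by rewrite (rt_top topR).
Qed.

Lemma C_leftmost_child R a t y :
  is_top R a -> t \in R -> p t \in R -> p t != t -> p t \notin C p r c1 k R ->
  y \in C p r c1 k R -> anc p t y -> c1 (p t) = Some t.
Proof.
move=> topR tR ptR ptt; have top := topR.2; have nta := top_not_child topR ptR ptt.
rewrite /C; case: ifP => _; first by rewrite ptR.
rewrite !inE negb_or => /andP[ptCV _] /or3P[yCV|/eqP yl|/eqP yrt] ty.
- exact: CVf_leftmost_child topR tR ptR ptt ptCV yCV ty.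
- apply: (leftmost_above_stepR (R := R) (n := #|V|) (top _ tR) nta).
  by move: ty; rewrite yl /lR /lv (rt_top topR).
- case/eqP: nta; apply: anc_antisym (top _ tR).
  by rewrite -(rt_top topR) -yrt.
Qed.

Lemma lR_parent S a x :
  is_top S a -> anc_convex S -> p x \in S -> x \notin S ->
  (forall t, p t \in S -> p t != t -> anc p t x -> c1 (p t) = Some t) ->
  lR p r c1 S = p x.
Proof.
move=> topS convS pxS xS lmx; have [aS top] := topS.
have pxx : p x != x by apply: contraNneq xS => <-.
have px_fixed : stepR c1 S (p x) = p x by rewrite /stepR lmx ?anc_refl // (negbTE xS).
have descend s : s \in S -> anc p s (p x) -> s != p x ->
    [/\ stepR c1 S s \in S, anc p (stepR c1 S s) (p x) & depth s < depth (stepR c1 S s)].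
  move=> sS spx nspx; have [t [pt nts tpx]] := anc_child spx nspx.
  have tS : t \in S.
    by apply: convS aS pxS (anc_trans (top s sS) _) tpx; rewrite -pt anc_parent.
  have c1s : c1 s = Some t.
    rewrite -pt; apply: lmx; first by rewrite pt.
      by rewrite pt eq_sym.
    exact: anc_trans tpx (anc_parent x).
  rewrite /stepR c1s tS; split=> //; apply: depth_lt; last by rewrite eq_sym.
  by rewrite -pt anc_parent.
(* Before reaching p x the path gains a level per step, and depths are at most #|V|. *)
have reach n : let s := iter n (stepR c1 S) a in
    [/\ s \in S, anc p s (p x) & s = p x \/ n < depth s].
  elim: n => [|n] /=.
    split; [by [] | exact: top | right].
    by rewrite /depth card_gt0; apply/set0Pn; exists a; rewrite inE anc_refl.
  set s := iter n _ a => -[sS spx lt_n].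
  have [-> | nspx] := eqVneq s (p x).
    by rewrite px_fixed; split=> //; [apply: anc_refl | left].
  have [s'S s'px lt_s] := descend s sS spx nspx; split=> //; right.
  by case: lt_n => [/eqP|lt_n]; [rewrite (negbTE nspx) | apply: leq_ltn_trans lt_n lt_s].
rewrite /lR /lv (rt_top topS); have [_ _ [//|]] := reach #|V|.
by rewrite ltnNge /depth max_card.
Qed.

End CanonicalSubtrees.

Unset Implicit Arguments.

Theorem lemma6 (V : finType) (p : V -> V) (r : V) (c1 : V -> option V) (k : nat) :
  is_rooted_tree p r -> is_leftmost p c1 -> 4 <= k ->
  forall u v : V, anc p v u ->
  forall Tu Tv : {set V},
    canonical p r c1 k Tu -> u \in C p r c1 k Tu ->
    canonical p r c1 k Tv -> v \in C p r c1 k Tv ->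
    Tv \subset Tu ->
  forall T' : {set V},
    component p (Tu :\: C p r c1 k Tu) T' -> v \in T' ->
  forall x : V,
    x \in [set y in C p r c1 k Tu | anc p v y && anc p y u] ->
    (forall y, y \in [set y in C p r c1 k Tu | anc p v y && anc p y u] -> anc p x y) ->
    x != r /\ (p x = rt p r T' \/ p x = lR p r c1 T').
Proof.
move=> tree leftmost _ u v _ Tu _ canTu uC _ _ _ T' compT' vT' x xX xtop.
have [a topTu] := canonical_top tree canTu.
have convTu := canonical_anc_convex tree canTu.
have uTu := subsetP (C_sub c1 k tree topTu) u uC.
have [connT' T'A _] := compT'.
have [vC vTu] : v \notin C p r c1 k Tu /\ v \in Tu.
  by apply/andP; rewrite -in_setD (subsetP T'A).
move: xX; rewrite inE => /and3P[xC vx xu].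
have nxv : x != v by apply: contraNneq vC => <-.
have xr : x != r.
  by apply: contra nxv => /eqP xr; move/ancP: vx => [n <-]; rewrite xr (iter_root tree).
have vpx : anc p v (p x).
  by case: (anc_eq_or_parent vx) => // vx_eq; rewrite vx_eq eqxx in nxv.
have pxT' : p x \in T'.
  apply: (component_down_closed compT' vT' vpx) => z vz zpx.
  have zu := anc_trans (anc_trans zpx (anc_parent p x)) xu.
  rewrite inE (convTu _ _ _ vTu uTu vz zu) andbT; apply/negP => zC.
  have xz := xtop z; rewrite inE zC vz zu in xz.
  case/eqP: xr; apply: (fixed_root tree); apply: (anc_antisym tree (anc_parent p x)).
  exact: anc_trans (xz isT) zpx.
have xT' : x \notin T' by apply: contraL xC => /(subsetP T'A); rewrite inE => /andP[].
have lmx t : p t \in T' -> p t != t -> anc p t x -> c1 (p t) = Some t.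
  move=> ptT' ptt tx; have /setDP[ptTu ptC] := subsetP T'A _ ptT'.
  apply: (C_leftmost_child tree leftmost topTu _ ptTu ptt ptC xC tx).
  exact: convTu ptTu uTu (anc_parent p t) (anc_trans tx xu).
have [a' topT'] := connected_top tree connT'.
split=> //; right; apply/esym/(lR_parent tree topT' _ pxT' xT' lmx).
exact: (connected_anc_convex tree connT').
Qed.
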